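(* Every $L$-selective $T_1$-space is an $\alpha_1$-space.
   Context: For spaces $Y$, $X$, a map $\varphi:Y\to\mathcal P(X)\setminus\{\emptyset\}$ is lower semicontinuous (l.s.c.) if $\{y:\varphi(y)\cap U\neq\emptyset\}$ is open in $Y$ for every open $U\subseteq X$; a selection is a map $f:Y\to X$ with $f(y)\in\varphi(y)$ for all $y$. $X$ is $Y$-selective if every l.s.c. map from $Y$ to the family of nonempty closed subsets of $X$ has a continuous selection. $X$ is $L$-selective if it is $(\omega+1)$-selective, where $\omega+1$ carries the order topology (a convergent sequence with its limit). A space $X$ is an $\alpha_1$-space if for every $x\in X$ and every countable family $\{A_n\}_{n\in\omega}$ of sequences converging to $x$ there is a sequence $A$ converging to $x$ such that $A_n\setminus A$ is finite for every $n$. *)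

From HB Require Import structures.
From mathcomp Require Import all_boot all_order.
From mathcomp Require Import all_classical all_reals all_analysis.
Set Implicit Arguments. Unset Strict Implicit. Unset Printing Implicit Defensive.
Local Open Scope classical_set_scope.

Definition lsc_closed_map (Y : Type) (openY : set (set Y))
  (X : topologicalType) (phi : Y -> set X) : Prop :=
  (forall y, phi y !=set0 /\ closed (phi y)) /\
  (forall U : set X, open U -> openY [set y | phi y `&` U !=set0]).

Definition cont_from (Y : Type) (openY : set (set Y))
  (X : topologicalType) (f : Y -> X) : Prop :=
  forall U : set X, open U -> openY (f @^-1` U).

Definition selective (Y : Type) (openY : set (set Y)) (X : topologicalType) : Prop :=
  forall phi : Y -> set X, lsc_closed_map openY phi ->
    exists f : Y -> X, cont_from openY f /\ forall y, phi y (f y).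

(* omega+1 represented as option nat, None = omega; the order topology:
   every finite ordinal is isolated, and basic neighbourhoods of omega are
   the tails (m, omega]. *)
Definition omega1_open : set (set (option nat)) :=
  [set U | U None -> exists m : nat, forall n : nat, (m <= n)%N -> U (Some n)].

Definition L_selective (X : topologicalType) : Prop :=
  selective omega1_open X.

(* alpha_1: sequences are maps nat -> X, viewed as sets through their range *)
Definition alpha1_space (X : topologicalType) : Prop :=
  forall (x : X) (A : nat -> nat -> X),
    (forall n, A n @ \oo --> x) ->
    exists B : nat -> X, B @ \oo --> x /\
      forall n, finite_set (range (A n) `\` range B).

(* Suppose some sequence e converges to x while avoiding x (otherwise every
   sequence converging to x is eventually constant and the constant sequence
   x works). Enumerate the pairs (N, j) by the Cantor pairing k and consider
   on omega + 1 the map sending omega to {x} and k to {e N, A N j}. It is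
   lower semicontinuous at omega because columns N with N large meet a
   neighbourhood of x through e N and the finitely many remaining columns
   through A N j with j large. A continuous selection f gives a sequence
   f(k) converging to x; since e n <> x and points are closed, f(n, j) differs
   from e n, hence equals A n j, for all but finitely many j. *)
From mathcomp Require Import all_boot all_order.
From mathcomp Require Import all_classical all_reals all_analysis.
From mathcomp Require Import zify.
From Stdlib Require Cantor.
Local Open Scope classical_set_scope.

Lemma finite_range_setD_near (T : Type) (a : nat -> T) (S : set T) :
  (\forall j \near \oo, S (a j)) -> finite_set (range a `\` S).
Proof.
move=> [K _ SaK]; apply: (@sub_finite_set _ _ (a @` `I_K)).
  move=> _ [[j _ <-] Saj]; exists j => //=; rewrite ltnNge.
  by apply/negP => /SaK.
exact/finite_image/finite_II.
Qed.

Lemma exists_cvg_avoiding {X : topologicalType} {u : nat -> X} {x : X} :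
  u @ \oo --> x -> ~ (\forall n \near \oo, u n = x) ->
  exists e : nat -> X, (forall n, e n <> x) /\ e @ \oo --> x.
Proof.
move=> u_cvg u_neq.
have /choice[s s_spec] : forall N, exists m, (N <= m)%N /\ u m <> x.
  move=> N; apply: contrapT => /forallNP u_eq; apply: u_neq.
  exists N => // m /= Nm; apply: contrapT => neq; exact: u_eq m (conj Nm neq).
exists (u \o s); split; first by move=> N; case: (s_spec N).
apply: cvg_comp u_cvg; apply/cvgnyPge => N.
by exists N => // m /= Nm; exact: leq_trans Nm (s_spec m).1.
Qed.

Lemma cvg_cantor_to_nat (N : nat) :
  (fun j => Cantor.to_nat (N, j)) @ \oo --> \oo.
Proof.
apply/cvgnyPge => M; exists M => // j /= Mj.
by have := Cantor.to_nat_non_decreasing N j; lia.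
Qed.

Lemma near_cantor_of_nat (P : nat -> nat -> Prop) :
  (\forall N \near \oo, forall j, P N j) ->
  (forall N, \forall j \near \oo, P N j) ->
  \forall k \near \oo, P (Cantor.of_nat k).1 (Cantor.of_nat k).2.
Proof.
move=> [M _ P_tail] P_col.
have [G _ P_head] : \forall j \near \oo, forall N : 'I_M, P N j.
  by apply: filter_forall => N; exact: P_col.
(* [to_nat (N, j) < G + (G + M)^2] whenever [N < M] and [j < G]. *)
exists (G + (G + M) * (G + M))%N => // k /= Kk.
case Ek: (Cantor.of_nat k) => [N j] /=.
have [MN|NM] := leqP M N; first exact: P_tail.
have [Gj|jG] := leqP G j; first exact: (P_head j Gj (Ordinal NM)).
have := Cantor.to_nat_spec N j; rewrite -Ek Cantor.cancel_to_of; nia.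
Qed.

Lemma omega1_cont_cvg {X : topologicalType} {f : option nat -> X} :
  cont_from omega1_open f -> (fun k => f (Some k)) @ \oo --> f None.
Proof.
move=> f_cont V; rewrite nbhsE => -[U [U_open Uf] UV].
by have [m f_tail] := f_cont U U_open Uf; exists m => // k /f_tail /UV.
Qed.

Section diagonal_selection.
Context {X : topologicalType} {x : X} {A : nat -> nat -> X} {e : nat -> X}.
Hypotheses (X_T1 : accessible_space X) (A_cvg : forall n, A n @ \oo --> x)
  (e_cvg : e @ \oo --> x) (e_neq : forall n, e n <> x).

Definition diagonal_map (o : option nat) : set X :=
  if o is Some k then
    let: (N, j) := Cantor.of_nat k in [set e N; A N j]
  else [set x].

Lemma diagonal_map_lsc : lsc_closed_map omega1_open diagonal_map.
Proof.
split.
  case=> [k|]; last by split; [exists x | exact: accessible_closed_set1].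
  rewrite /diagonal_map; case: (Cantor.of_nat k) => N j.
  split; first by exists (e N); left.
  by apply: closedU; exact: accessible_closed_set1.
move=> U U_open /= [_ [-> Ux]].
have near_U (u : nat -> X) : u @ \oo --> x -> \forall n \near \oo, U (u n).
  by move=> u_cvg; apply: u_cvg; exact: open_nbhs_nbhs.
have e_tail : \forall N \near \oo, forall j, U (e N) \/ U (A N j).
  by apply: filterS (near_U _ e_cvg) => N UeN j; left.
have A_col N : \forall j \near \oo, U (e N) \/ U (A N j).
  by apply: filterS (near_U _ (A_cvg N)) => j UA; right.
have [m _ U_tail] := near_cantor_of_nat _ e_tail A_col.
exists m => k /U_tail; rewrite /diagonal_map /=.
case: (Cantor.of_nat k) => N j /= [UeN|UA].
  by exists (e N); split => //; left.
by exists (A N j); split => //; right.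
Qed.

Context {f : option nat -> X}.
Hypothesis f_sel : forall o, diagonal_map o (f o).

Lemma diagonal_selection_None : f None = x.
Proof. exact: f_sel None. Qed.

Lemma finite_range_setD_diagonal_selection (n : nat) :
  cont_from omega1_open f ->
  finite_set (range (A n) `\` range (fun k => f (Some k))).
Proof.
move=> f_cont; apply: finite_range_setD_near.
have f_cvg := omega1_cont_cvg f_cont; rewrite diagonal_selection_None in f_cvg.
have f_neq : \forall k \near \oo, f (Some k) <> e n.
  apply: (f_cvg (~` [set e n])); apply: open_nbhs_nbhs; split.
    by apply: closed_openC; exact: accessible_closed_set1.
  by move=> /esym /e_neq.
have f_neq_col : \forall j \near \oo, f (Some (Cantor.to_nat (n, j))) <> e n.
  exact: cvg_cantor_to_nat f_neq.
apply: filterS f_neq_col => j /=.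
have := f_sel (Some (Cantor.to_nat (n, j))).
rewrite /diagonal_map Cantor.cancel_of_to.
by case=> [//|<-] _; exists (Cantor.to_nat (n, j)).
Qed.

End diagonal_selection.

Theorem mainTheorem3 (X : topologicalType) :
  @accessible_space X -> L_selective X -> alpha1_space X.
Proof.
move=> X_T1 X_LS x A A_cvg.
have [[e [e_neq e_cvg]]|no_avoiding] :=
  pselect (exists e : nat -> X, (forall n, e n <> x) /\ e @ \oo --> x).
  have [f [f_cont f_sel]] := X_LS _ (diagonal_map_lsc X_T1 A_cvg e_cvg).
  exists (fun k => f (Some k)); split.
    by rewrite -(diagonal_selection_None f_sel); exact: omega1_cont_cvg.
  by move=> n; exact: finite_range_setD_diagonal_selection.
exists (cst x); split; first exact: cvg_cst.
move=> n; apply: finite_range_setD_near.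
have A_eq : \forall j \near \oo, A n j = x.
  by apply: contrapT => /(exists_cvg_avoiding (A_cvg n)) /no_avoiding.
by apply: filterS A_eq => j ->; exists 0.
Qed.
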